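(* Let $G$ be a finite group and $p$ a prime. If $G$ contains a central nonidentity $p$-subgroup, then $\chi(\mathcal F^*_G)=1$ and $\chi(\mathcal L^*_G)=|G:O^pG|^{-1}$.
   Context: $N_G(H,K)=\{g\in G: g^{-1}Hg\le K\}$; $O^p(X)$ is the smallest normal subgroup of $X$ with $p$-group quotient. $\mathcal F^*_G$ and $\mathcal L^*_G$ have as objects the nonidentity $p$-subgroups of $G$, with $\mathcal F^*_G(H,K)=C_G(H)\backslash N_G(H,K)$ and $\mathcal L^*_G(H,K)=O^p(C_G(H))\backslash N_G(H,K)$, composition induced by multiplication. $\chi$ is Leinster's Euler characteristic: for a finite category $\mathcal C$, a weighting is $k^\bullet$ with $\sum_b|\mathcal C(a,b)|k^b=1$ for all $a$, a coweighting is $k_\bullet$ with $\sum_ak_a|\mathcal C(a,b)|=1$ for all $b$, and if both exist $\chi(\mathcal C)=\sum_bk^b=\sum_ak_a$. *)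

From HB Require Import structures.
From mathcomp Require Import all_boot all_order all_algebra all_fingroup all_solvable.
Set Implicit Arguments. Unset Strict Implicit. Unset Printing Implicit Defensive.
Import GRing.Theory Num.Theory.
Local Open Scope group_scope.

(* Leinster's Euler characteristic of a finite category, which only depends on
   the object set [Ob] and the cardinalities [hom a b] of the hom-sets. *)
Section Leinster.
Variables (O : finType) (Ob : {set O}) (hom : O -> O -> nat).

Definition is_weighting (k : O -> rat) : Prop :=
  forall a, a \in Ob -> (\sum_(b in Ob) (hom a b)%:R * k b = 1)%R.

Definition is_coweighting (k : O -> rat) : Prop :=
  forall b, b \in Ob -> (\sum_(a in Ob) k a * (hom a b)%:R = 1)%R.

Definition euler_char_is (x : rat) : Prop :=
  [/\ (exists k, is_weighting k), (exists k, is_coweighting k),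
      (forall k, is_weighting k -> (\sum_(b in Ob) k b)%R = x)
    & (forall k, is_coweighting k -> (\sum_(a in Ob) k a)%R = x)].
End Leinster.

Section Defs.
Variable gT : finGroupType.

Definition Oup (p : nat) (X : {set gT}) : {set gT} :=
  \bigcap_(N : {group gT} | (N <| X) && p.-group (X / N)) N.

Definition transporter (G H K : {set gT}) : {set gT} :=
  [set g in G | H :^ g \subset K].

Definition objs (p : nat) (G : {group gT}) : {set {group gT}} :=
  [set H : {group gT} | [&& H \subset G, p.-group H & H :!=: 1]].

Definition homF (G H K : {group gT}) : {set {set gT}} :=
  rcosets 'C_G(H) (transporter G H K).

Definition homL (p : nat) (G H K : {group gT}) : {set {set gT}} :=
  rcosets (Oup p 'C_G(H)) (transporter G H K).

End Defs.

(* Every hom-set is a set of D(H)-cosets in the transporter N_G(H,K), with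
   D = C_G or D = O^p C_G, so |hom(H,K)| = |D(H)|^-1 * #{g in G | H^g <= K}.
   Summing over g turns both weighting equations into unitriangular systems
   for the inclusion order of subgroups.  A coweighting is v_H = |D(H)|/|G| m_H
   for any solution m of sum_(H <= K) m_H = 1.  For a weighting, put weight
   only on objects containing the central p-subgroup Z: as H^g Z is again an
   object and D(H^g Z) has the order of D(H), any solution of
   sum_(K >= L) k_K = |D(L)|/|G| (L >= Z) is a weighting, of total mass
   |D(Z)|/|G|.  Since C_G(Z) = G this is 1 for D = C_G and |O^p G|/|G| for
   D = O^p C_G. *)

From HB Require Import structures.
From mathcomp Require Import all_boot all_order all_algebra all_fingroup all_solvable.
From mathcomp Require Import ring.
Set Implicit Arguments. Unset Strict Implicit. Unset Printing Implicit Defensive.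
Import GRing.Theory Num.Theory.
Local Open Scope group_scope.

Section Leinster.
Local Open Scope ring_scope.
Variables (O : finType) (Ob : {set O}) (hom : O -> O -> nat).

Lemma sum_weighting_coweighting (k v : O -> rat) :
  is_weighting Ob hom k -> is_coweighting Ob hom v ->
  \sum_(b in Ob) k b = \sum_(a in Ob) v a.
Proof.
move=> hk hv.
transitivity (\sum_(a in Ob) \sum_(b in Ob) v a * (hom a b)%:R * k b).
  rewrite exchange_big /=; apply: eq_bigr => b Ob_b.
  by rewrite -mulr_suml hv // mul1r.
apply: eq_bigr => a Ob_a.
by under eq_bigr do rewrite -mulrA; rewrite -mulr_sumr hk ?mulr1.
Qed.

Lemma euler_char_of_weighting (w v : O -> rat) :
  is_weighting Ob hom w -> is_coweighting Ob hom v ->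
  euler_char_is Ob hom (\sum_(b in Ob) w b).
Proof.
move=> hw hv; split; [by exists w | by exists v | |].
- by move=> k hk; rewrite !(sum_weighting_coweighting _ hv).
- by move=> k hk; rewrite (sum_weighting_coweighting hw hk).
Qed.

End Leinster.

Lemma unitriangular_system_solvable (T : finType) (R : zmodType) (r : rel T)
    (rank : T -> nat) (c : T -> R) :
  reflexive r -> (forall a b, r a b -> a != b -> rank a < rank b)%N ->
  forall S : {set T}, exists k : T -> R,
    forall a, a \in S -> (\sum_(b in S | r a b) k b = c a)%R.
Proof.
move=> r_refl r_rank S.
(* A rank-minimal a in S lies above no other element of S, so only its own
   equation involves k a. *)
elim: {S}_.+1 {-2}S (ltnSn #|S|) => // n IH S leS.
have [-> | [a0 Sa0]] := set_0Vmem S; first by exists (fun=> 0%R) => a; rewrite inE.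
have [a Sa a_min] := arg_minnP rank Sa0.
have {}Sa : a \in S := Sa.
have [|k hk] := IH (S :\ a); first by rewrite (cardsD1 a) Sa in leS.
pose k' b := if b == a then (c a - \sum_(b in S :\ a | r a b) k b)%R else k b.
exists k' => a' Sa'.
have sum_off_a a'' : (\sum_(b | (b \in S) && r a'' b && (b != a)) k' b =
                      \sum_(b in S :\ a | r a'' b) k b)%R.
  apply: eq_big => [b | b /andP[_ /negbTE b_a]]; last by rewrite /k' b_a.
  by rewrite in_setD1; case: (b != a) (b \in S) (r a'' b) => [] [] [].
rewrite (bigID (fun b => b != a)) /= sum_off_a.
have [-> | a'_a] := eqVneq a' a.
  rewrite [X in (_ + X)%R](big_pred1 a) => [|b]; first by rewrite /k' eqxx addrC addrNK.
  by rewrite /= negbK; case: eqP => [-> | _]; rewrite ?Sa ?r_refl ?andbF.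
have not_r_a'a : ~~ r a' a.
  by apply/negP => /r_rank/(_ a'_a); rewrite ltnNge a_min.
rewrite [X in (_ + X)%R]big_pred0 ?addr0 ?hk ?in_setD1 ?a'_a // => b.
by rewrite negbK; case: eqP => [-> | _]; rewrite ?andbF ?(negbTE not_r_a'a) ?andbF.
Qed.

Section Transporter.
Variable gT : finGroupType.
Implicit Types (p : nat) (G H K Z : {group gT}).

Lemma rcosets_partition_stable (C : {group gT}) (A : {set gT}) :
  C * A \subset A -> partition (rcosets C A) A.
Proof.
move=> sCA; apply/and3P; split.
- apply/eqP/setP => x; apply/bigcupP/idP => [[_ /rcosetsP[y Ay ->]] | Ax].
    by case/rcosetP => c Cc ->; apply: (subsetP sCA); apply: mem_mulg.
  by exists (C :* x); [apply/rcosetsP; exists x | apply: rcoset_refl].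
- apply/trivIsetP => _ _ /rcosetsP[x _ ->] /rcosetsP[y _ ->] Cx_Cy.
  rewrite -setI_eq0; apply: contraR Cx_Cy.
  by case/set0Pn => z /setIP[/rcoset_eqP <- /rcoset_eqP ->].
- by apply/rcosetsP => -[x _ Cx0]; have := rcoset_refl C x; rewrite -Cx0 inE.
Qed.

Lemma card_rcosets_stable (C : {group gT}) (A : {set gT}) :
  C * A \subset A -> (#|rcosets C A| * #|C|)%N = #|A|.
Proof.
move=> sCA.
rewrite -(card_uniform_partition (n := #|C|) _ (rcosets_partition_stable sCA)) //.
by move=> _ /rcosetsP[x _ ->]; rewrite card_rcoset.
Qed.

Lemma subcent_transporter_stable G H K (C : {group gT}) :
  C \subset 'C_G(H) -> C * transporter G H K \subset transporter G H K.
Proof.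
move=> sCC; apply/subsetP => _ /mulsgP[c t /(subsetP sCC)/setIP[Gc cHc] Tt ->].
move: Tt; rewrite !inE => /andP[Gt sHtK]; rewrite groupM //=.
by rewrite conjsgM (normP (subsetP (cent_sub H) c cHc)).
Qed.

Lemma card_transporter G H K :
  #|transporter G H K| = (\sum_(g in G) (H :^ g \subset K))%N.
Proof. by rewrite -sum1dep_card big_mkcondr /=; apply: eq_bigr => g; case: ifP. Qed.

Lemma objsJ p G H g : H \in objs p G -> g \in G -> (H :^ g)%G \in objs p G.
Proof.
rewrite !inE /= => /and3P[sHG pH ntH] Gg.
by rewrite -{1}(conjGid Gg) conjSg sHG pgroupJ pH conjsg_eq1 ntH.
Qed.

Lemma joing_central_objs p G Z H :
  Z \subset 'Z(G) -> p.-group Z -> H \in objs p G -> (H <*> Z)%G \in objs p G.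
Proof.
move=> sZZG pZ; rewrite !inE /= => /and3P[sHG pH ntH].
have [sZG cGZ] : Z \subset G /\ Z \subset 'C(G) by apply/subsetIP.
have cHZ : Z \subset 'C(H) by rewrite centsC (subset_trans sHG) // centsC.
rewrite join_subG sHG sZG /= cent_joinEr // pgroupM pH pZ /=.
by apply: contraNneq ntH => HZ1; rewrite -subG1 -HZ1 mulG_subl.
Qed.

End Transporter.

Section SubgroupSystems.
Variables (gT : finGroupType) (R : zmodType).
Variables (S : {set {group gT}}) (c : {group gT} -> R).

Lemma exists_supergroup_system :
  exists k, forall H, H \in S -> (\sum_(K in S | H \subset K) k K = c H)%R.
Proof.
apply: (@unitriangular_system_solvable _ _ (fun H K : {group gT} => H \subset K)
                                        (fun H => #|H|) c) => [H | H K sHK neHK].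
  exact: subxx.
apply: proper_card; rewrite properEneq sHK andbT.
by apply: contraNneq neHK => /val_inj ->.
Qed.

Lemma exists_subgroup_system :
  exists k, forall H, H \in S -> (\sum_(K in S | K \subset H) k K = c H)%R.
Proof.
apply: (@unitriangular_system_solvable _ _ (fun H K : {group gT} => K \subset H)
                                        (fun H => #|~: H|) c) => [H | H K sKH neHK].
  exact: subxx.
apply: proper_card; rewrite properC properEneq sKH andbT.
by apply: contraNneq neHK => /val_inj ->.
Qed.

End SubgroupSystems.

Section TransporterCosets.
Local Open Scope ring_scope.
Variables (gT : finGroupType) (p : nat) (G : {group gT}).
Implicit Types H K : {group gT}.
Variable D : {group gT} -> {group gT}.
Hypothesis sDC : forall H, D H \subset 'C_G(H).
Hypothesis card_DJ : forall H g, g \in G -> #|D (H :^ g)%G| = #|D H|.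

Let hom (H K : {group gT}) := #|rcosets (D H) (transporter G H K)|.

Let card_G_neq0 : #|G|%:R != 0 :> rat.
Proof. by rewrite pnatr_eq0 -lt0n cardG_gt0. Qed.

Let card_D_neq0 H : #|D H|%:R != 0 :> rat.
Proof. by rewrite pnatr_eq0 -lt0n cardG_gt0. Qed.

Lemma natr_hom (H K : {group gT}) :
  (hom H K)%:R = #|D H|%:R^-1 * \sum_(g in G) (H :^ g \subset K)%:R :> rat.
Proof.
have := card_rcosets_stable (subcent_transporter_stable K (sDC H)).
rewrite card_transporter => /(congr1 (fun n => n%:R : rat)).
by rewrite natrM natr_sum => <-; rewrite mulrC mulfK.
Qed.

Lemma exists_transporter_coweighting : exists v, is_coweighting (objs p G) hom v.
Proof.
have [m hm] := exists_subgroup_system (objs p G) (fun=> 1 : rat).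
exists (fun H => #|D H|%:R / #|G|%:R * m H) => K oK.
rewrite (eq_bigr (fun H : {group gT} =>
                   #|G|%:R^-1 * \sum_(g in G) (H :^ g \subset K)%:R * m H)) => [|H _];
  last first.
  by rewrite natr_hom -mulr_suml; field; rewrite card_G_neq0 card_D_neq0.
rewrite -mulr_sumr exchange_big /= (eq_bigr (fun=> 1)) => [|g Gg].
  by rewrite sumr_const mulVf.
rewrite -[RHS](hm _ (objsJ oK (groupVr Gg))) [RHS]big_mkcondr /=.
by apply: eq_bigr => H _; rewrite sub_conjg; case: (H \subset _); rewrite ?mul1r ?mul0r.
Qed.

Variable Z : {group gT}.
Hypotheses (sZZG : Z \subset 'Z(G)) (pZ : p.-group Z) (ntZ : (Z :!=: 1)%g).
Hypothesis card_DZ : forall H : {group gT}, #|D (H <*> Z)%G| = #|D H|.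

Lemma exists_transporter_weighting :
  exists2 w, is_weighting (objs p G) hom w
           & \sum_(K in objs p G) w K = #|D Z|%:R / #|G|%:R.
Proof.
pose objsZ := [set K in objs p G | Z \subset K].
have [k hk] := exists_supergroup_system objsZ (fun H => #|D H|%:R / #|G|%:R : rat).
pose w K := if Z \subset K then k K else 0.
have sum_w (P : pred {group gT}) :
    \sum_(K in objs p G) (P K)%:R * w K = \sum_(K in objsZ | P K) k K.
  rewrite big_mkcond [RHS]big_mkcond; apply: eq_bigr => K _.
  by rewrite [K \in objsZ]inE /w; case: (K \in _); case: (Z \subset K); case: (P K);
    rewrite ?mul1r ?mul0r.
have wZ K : (Z \subset K)%:R * w K = w K by rewrite /w; case: ifP; rewrite ?mul1r.
exists w; last first.
  have oZ : Z \in objsZ.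
    by rewrite !inE subxx pZ ntZ (subset_trans sZZG (center_sub G)).
  by rewrite -(hk Z oZ) -sum_w; apply: eq_bigr => K _; rewrite wZ.
move=> H oH.
rewrite (eq_bigr (fun K => #|D H|%:R^-1 * \sum_(g in G) (H :^ g \subset K)%:R * w K))
  => [|K _]; last by rewrite natr_hom -mulrA mulr_suml.
rewrite -mulr_sumr exchange_big /= (eq_bigr (fun=> #|D H|%:R / #|G|%:R)) => [|g Gg].
  by rewrite sumr_const -mulr_natr; field; rewrite card_G_neq0 card_D_neq0.
have oHgZ : (H :^ g <*> Z)%G \in objsZ.
  by rewrite inE joing_subr joing_central_objs ?objsJ.
rewrite -(card_DJ H Gg) -card_DZ -(hk _ oHgZ) -sum_w.
apply: eq_bigr => K _; rewrite join_subG -[in LHS]wZ.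
by case: (H :^ g \subset K); case: (Z \subset K); rewrite ?mul1r ?mul0r.
Qed.

Lemma euler_char_transporter_cosets :
  euler_char_is (objs p G) hom (#|D Z|%:R / #|G|%:R).
Proof.
have [w hw <-] := exists_transporter_weighting.
have [v hv] := exists_transporter_coweighting.
exact: euler_char_of_weighting hw hv.
Qed.

End TransporterCosets.

Section PResidual.
Variable gT : finGroupType.
Implicit Types (p : nat) (G H X N Z : {group gT}).

Lemma Oup_group_set p X : group_set (Oup p X).
Proof. exact: group_set_bigcap. Qed.

Canonical Oup_group p X := Group (Oup_group_set p X).

Lemma Oup_sub p X : Oup p X \subset X.
Proof. by apply: bigcap_inf; rewrite normal_refl trivg_quotient pgroup1. Qed.

Lemma normal_pquotientJ p X N g :
  (N :^ g <| X :^ g) && p.-group ((X :^ g) / (N :^ g)) =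
  (N <| X) && p.-group (X / N).
Proof.
rewrite normalJ; case nNX: (N <| X) => //=.
have nNXg : N :^ g <| X :^ g by rewrite normalJ.
by rewrite !pgroupE !card_quotient ?normal_norm // indexJg.
Qed.

Lemma OupJ p X g : Oup p (X :^ g) = Oup p X :^ g.
Proof.
apply/setP => x; rewrite mem_conjg; apply/bigcapP/bigcapP => Xx N pN.
  by have := Xx (N :^ g)%G; rewrite normal_pquotientJ mem_conjg; apply.
have := Xx (N :^ g^-1)%G; rewrite -(normal_pquotientJ p X _ g) /= conjsgKV.
by rewrite memJ_conjg; apply.
Qed.

Lemma subcentJ G H g : g \in G -> 'C_G(H :^ g) = 'C_G(H) :^ g.
Proof. by move=> Gg; rewrite centJ -{1}(conjGid Gg) conjIg. Qed.

Lemma subcent_joing_central G H Z : Z \subset 'Z(G) -> 'C_G(H <*> Z) = 'C_G(H).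
Proof.
move=> /subsetIP[_ cGZ]; rewrite centY setIA; apply/setIidPl.
by rewrite subIset // centsC cGZ.
Qed.

End PResidual.

Theorem proposition5p1 (gT : finGroupType) (G : {group gT}) (p : nat) :
  prime p ->
  (exists Z : {group gT}, [&& Z \subset 'Z(G), p.-group Z & Z :!=: 1]) ->
  euler_char_is (objs p G) (fun H K => #|homF G H K|) 1%R /\
  euler_char_is (objs p G) (fun H K => #|homL p G H K|)
    ((#|G : Oup p G|)%:R^-1)%R.
Proof.
move=> _ [Z /and3P[sZZG pZ ntZ]].
have CGZ : 'C_G(Z) = G by apply/setIidPl; rewrite centsC; case/subsetIP: sZZG.
have card_CJ (H : {group gT}) g : g \in G -> #|'C_G(H :^ g)| = #|'C_G(H)|.
  by move=> Gg; rewrite subcentJ ?cardJg.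
have card_CZ (H : {group gT}) : #|'C_G(H <*> Z)| = #|'C_G(H)|.
  by rewrite subcent_joing_central.
split.
  have := euler_char_transporter_cosets (D := fun H => 'C_G(H)%G) (fun H => subxx _)
            card_CJ sZZG pZ ntZ card_CZ.
  by rewrite /= CGZ divff // pnatr_eq0 -lt0n cardG_gt0.
have card_OCJ (H : {group gT}) g :
    g \in G -> #|Oup p 'C_G(H :^ g)| = #|Oup p 'C_G(H)|.
  by move=> Gg; rewrite subcentJ // (OupJ p 'C_G(H)%G) cardJg.
have card_OCZ (H : {group gT}) : #|Oup p 'C_G(H <*> Z)| = #|Oup p 'C_G(H)|.
  by rewrite subcent_joing_central.
have := euler_char_transporter_cosets (D := fun H => Oup_group p 'C_G(H))
          (fun H => Oup_sub p _) card_OCJ sZZG pZ ntZ card_OCZ.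
rewrite /= CGZ -(Lagrange (Oup_sub p G)) natrM invfM mulVKf //.
by rewrite pnatr_eq0 -lt0n cardG_gt0.
Qed.
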